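(* For any locale $X$, the functors $\Lambda$ and $\Gamma$ (of the equivalence $Sh(X)\simeq LH/X$) restrict to an equivalence of categories $\mathfrak{POS}_X\simeq POLH/X$ between the category of posheaves on $X$ with order-preserving morphisms and the category of partially ordered sheaf locales over $X$ with order-preserving maps.
   Context: Let $X$ be a locale with frame of opens $\mathcal{O}(X)$. A posheaf on $X$ is a sheaf of sets $F$ with (POS1) each $F(u)$ a poset; (POS2) restriction maps $F(u)\to F(v)$, $x\mapsto x|_v$ ($v\le u$), order-preserving; (POS3) if $u=\bigvee_i u_i$ and $s,t\in F(u)$ satisfy $s|_{u_i}\le t|_{u_i}$ for all $i$, then $s\le t$; a morphism of posheaves is order-preserving if each component $F(u)\to G(u)$ is monotone. A local homeomorphism $f:Y\to X$ is a locale map such that $Y$ is covered by open sublocales $U$ with each $U\rightarrowtail Y\to X$ isomorphic to an open inclusion. $\Gamma(f)(u)$ is the set of sections of $f$ over $u$ (locale maps $s:\downarrow u\to Y$ with $fs$ the inclusion), and the restriction $s|_v$ to $v\le u$ has $s|_v^*(y)=s^*(y)\wedge v$. A local homeomorphism $f$ is a partially ordered sheaf locale if (POSL1) each $\Gamma(f)(u)$ carries a partial order; (POSL2) $s\le t$ in $\Gamma(f)(u)$ implies $s|_v\le t|_v$ for $v\le u$; (POSL3) if $u=\bigvee u_i$ and $s,t\in\Gamma(f)(u)$ with $s|_{u_i}\le t|_{u_i}$ for all $i$, then $s\le t$. For such $f:Y\to X$, $g:Z\to X$, a locale map $\phi:Y\to Z$ with $g\phi=f$ is order-preserving if each map $\Gamma(f)(u)\to\Gamma(g)(u)$,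 $s\mapsto\phi s$, is monotone. $\Lambda(F)$ for a sheaf $F$ is the locale whose frame consists of families $(x_s)_{s\in\coprod_uF(u)}$ with $x_s\le u_s$ ($u_s=u$ for $s\in F(u)$) and $x_s\wedge\epsilon(s,t)=x_t\wedge\epsilon(s,t)$, $\epsilon(s,t)=\bigvee\{w\le u_s\wedge u_t\mid s|_w=t|_w\}$; its sections over $u$ correspond bijectively to $F(u)$ via $s\mapsto p_s$ (with $p_s^*$ the $s$-th projection), and $\Lambda(F)$ is ordered by transporting the order of $F(u)$ along this bijection. *)

From Stdlib Require Import ProofIrrelevance FunctionalExtensionality.

Set Implicit Arguments.
Unset Strict Implicit.

(* Frames.  A locale X is given by its frame of opens O(X).            *)
(* A locale map f : Y -> X is given by its frame homomorphism           *)
(* f^* : O(X) -> O(Y).                                                  *)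

Record frame := Frame {
  fcar :> Type;
  fle : fcar -> fcar -> Prop;
  fmeet : fcar -> fcar -> fcar;
  fsup : (fcar -> Prop) -> fcar;
  fle_refl : forall a, fle a a;
  fle_trans : forall a b c, fle a b -> fle b c -> fle a c;
  fle_antisym : forall a b, fle a b -> fle b a -> a = b;
  fmeet_l : forall a b, fle (fmeet a b) a;
  fmeet_r : forall a b, fle (fmeet a b) b;
  fmeet_glb : forall a b c, fle c a -> fle c b -> fle c (fmeet a b);
  fsup_ub : forall (S : fcar -> Prop) a, S a -> fle a (fsup S);
  fsup_lub : forall (S : fcar -> Prop) b, (forall a, S a -> fle a b) -> fle (fsup S) b;
  fdistr : forall a (S : fcar -> Prop),
      fmeet a (fsup S) = fsup (fun c => exists b, S b /\ c = fmeet a b)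
}.

Arguments fle {f}.
Arguments fmeet {f}.
Arguments fsup {f}.

Definition ftop (L : frame) : L := fsup (fun _ : L => True).

Section FrameLemmas.
Variable L : frame.
Implicit Types a b c : L.

Lemma meetC a b : fmeet a b = fmeet b a.
Proof. apply fle_antisym; apply fmeet_glb; (apply fmeet_r || apply fmeet_l). Qed.

Lemma meetA a b c : fmeet a (fmeet b c) = fmeet (fmeet a b) c.
Proof.
apply fle_antisym.
- apply fmeet_glb; [apply fmeet_glb|].
  + apply fmeet_l.
  + eapply fle_trans; [apply fmeet_r|apply fmeet_l].
  + eapply fle_trans; [apply fmeet_r|apply fmeet_r].
- apply fmeet_glb; [|apply fmeet_glb].
  + eapply fle_trans; [apply fmeet_l|apply fmeet_l].
  + eapply fle_trans; [apply fmeet_l|apply fmeet_r].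
  + apply fmeet_r.
Qed.

Lemma meet_eq_l a b : fle a b -> fmeet a b = a.
Proof.
intro H; apply fle_antisym; [apply fmeet_l|apply fmeet_glb; [apply fle_refl|exact H]].
Qed.

Lemma meet_eq_r a b : fle b a -> fmeet a b = b.
Proof. intro H; rewrite meetC; apply meet_eq_l; exact H. Qed.

Lemma meet_self_distr a b c : fmeet (fmeet a b) c = fmeet (fmeet a c) (fmeet b c).
Proof.
apply fle_antisym.
- apply fmeet_glb; apply fmeet_glb; try apply fmeet_r.
  + eapply fle_trans; [apply fmeet_l|apply fmeet_l].
  + eapply fle_trans; [apply fmeet_l|apply fmeet_r].
- apply fmeet_glb; [apply fmeet_glb|].
  + eapply fle_trans; [apply fmeet_l|apply fmeet_l].
  + eapply fle_trans; [apply fmeet_r|apply fmeet_l].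
  + eapply fle_trans; [apply fmeet_l|apply fmeet_r].
Qed.

Lemma sup_ext (P Q : L -> Prop) :
  (forall c, P c -> fle c (fsup Q)) -> (forall c, Q c -> fle c (fsup P)) ->
  fsup P = fsup Q.
Proof. intros H1 H2; apply fle_antisym; apply fsup_lub; assumption. Qed.

Lemma distr_r a (S : L -> Prop) :
  fmeet (fsup S) a = fsup (fun c => exists b, S b /\ c = fmeet b a).
Proof.
rewrite meetC, fdistr; apply sup_ext; intros c [b [Hb ->]]; apply fsup_ub;
exists b; split; auto; apply meetC.
Qed.

Lemma cover_le (I : Type) (c : I -> L) (u : L) :
  u = fsup (fun w => exists i, w = c i) -> forall i, fle (c i) u.
Proof. intros -> i; apply fsup_ub; exists i; reflexivity. Qed.

End FrameLemmas.

Lemma sig_eq (A : Type) (P : A -> Prop) (x y : {a : A | P a}) :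
  proj1_sig x = proj1_sig y -> x = y.
Proof.
destruct x as [x px], y as [y py]; simpl; intros ->.
rewrite (proof_irrelevance _ px py); reflexivity.
Qed.

Definition frame_hom (A B : frame) (h : A -> B) : Prop :=
  h (ftop A) = ftop B /\ (forall a b, h (fmeet a b) = fmeet (h a) (h b)) /\
  (forall S : A -> Prop, h (fsup S) = fsup (fun y => exists x, S x /\ y = h x)).

(* frame homomorphism A -> O(down u), where O(down u) = {x in O(X) | x <= u}
   (the frame of the open sublocale down u of X; its top is u, its meets
   and joins are computed in O(X)).  Equivalently: a locale map down u -> A. *)
Definition down_hom (A X : frame) (u : X) (h : A -> X) : Prop :=
  (forall a, fle (h a) u) /\ h (ftop A) = u /\
  (forall a b, h (fmeet a b) = fmeet (h a) (h b)) /\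
  (forall S : A -> Prop, h (fsup S) = fsup (fun y => exists x, S x /\ y = h x)).

(* The open sublocale down a of Y is such that down a >-> Y -> X is
   isomorphic (over X) to an open inclusion down v >-> X: an isomorphism
   of locales down a ~= down v is an order isomorphism between the frames
   {y <= a} and {x <= v}; g is its frame map {x <= v} -> {y <= a}, and the
   triangle over X commutes: g (x /\ v) = f^*(x) /\ a. *)
Definition open_iso_piece (X Y : frame) (f : X -> Y) (a : Y) : Prop :=
  exists (v : X) (g : X -> Y) (h : Y -> X),
    (forall x, fle x v -> fle (g x) a) /\ (forall y, fle y a -> fle (h y) v) /\
    (forall x, fle x v -> h (g x) = x) /\ (forall y, fle y a -> g (h y) = y) /\
    (forall x x', fle x v -> fle x' v -> fle x x' -> fle (g x) (g x')) /\
    (forall y y', fle y a -> fle y' a -> fle y y' -> fle (h y) (h y')) /\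
    (forall x, g (fmeet x v) = fmeet (f x) a).

Definition local_homeo (X Y : frame) (f : X -> Y) : Prop :=
  frame_hom f /\ fsup (open_iso_piece f) = ftop Y.

(* s : down u -> Y (as s^* : O(Y) -> O(down u)) is a section of f over u *)
Definition is_section (X Y : frame) (f : X -> Y) (u : X) (s : Y -> X) : Prop :=
  down_hom u s /\ (forall x, s (f x) = fmeet x u).

Definition restr (X Y : frame) (s : Y -> X) (v : X) : Y -> X :=
  fun y => fmeet (s y) v.

Definition partial_order (T : Type) (R : T -> T -> Prop) : Prop :=
  (forall a, R a a) /\ (forall a b, R a b -> R b a -> a = b) /\
  (forall a b c, R a b -> R b c -> R a c).

(* partially ordered sheaf locale: ord u is the order on Gamma(f)(u) *)
Definition is_POLH (X Y : frame) (f : X -> Y)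
    (ord : X -> (Y -> X) -> (Y -> X) -> Prop) : Prop :=
  local_homeo f /\
  (forall u, (forall s, is_section f u s -> ord u s s) /\
     (forall s t, is_section f u s -> is_section f u t -> ord u s t -> ord u t s -> s = t) /\
     (forall s t r, is_section f u s -> is_section f u t -> is_section f u r ->
        ord u s t -> ord u t r -> ord u s r)) /\
  (forall u v s t, fle v u -> is_section f u s -> is_section f u t ->
     ord u s t -> ord v (restr s v) (restr t v)) /\
  (forall (I : Type) (c : I -> X) (u : X) s t,
     u = fsup (fun w => exists i, w = c i) ->
     is_section f u s -> is_section f u t ->
     (forall i, ord (c i) (restr s (c i)) (restr t (c i))) -> ord u s t).

(* phi : Y -> Z locale map over X, for f : Y -> X, g : Z -> X
   (phi given by phi^* : O(Z) -> O(Y)) *)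
Definition over_map (X Y Z : frame) (f : X -> Y) (g : X -> Z) (phi : Z -> Y) : Prop :=
  frame_hom phi /\ (forall x, phi (g x) = f x).

Definition op_map (X Y Z : frame) (f : X -> Y)
    (ordf : X -> (Y -> X) -> (Y -> X) -> Prop)
    (ordg : X -> (Z -> X) -> (Z -> X) -> Prop) (phi : Z -> Y) : Prop :=
  forall u s t, is_section f u s -> is_section f u t -> ordf u s t ->
    ordg u (fun z => s (phi z)) (fun z => t (phi z)).

Record presheaf (X : frame) := Presheaf {
  sec :> X -> Type;
  res : forall u v : X, fle v u -> sec u -> sec v;
  res_id : forall u (p : fle u u) s, res p s = s;
  res_comp : forall u v w (p : fle v u) (q : fle w v) (r : fle w u) s,
      res q (res p s) = res r s
}.
Arguments res {X} p0 {u v} p s.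

Definition is_sheaf (X : frame) (F : presheaf X) : Prop :=
  forall (I : Type) (c : I -> X) (u : X) (Hu : u = fsup (fun w => exists i, w = c i))
    (s : forall i, F (c i)),
    (forall i j, res F (fmeet_l (c i) (c j)) (s i) = res F (fmeet_r (c i) (c j)) (s j)) ->
    exists t : F u, (forall i, res F (cover_le Hu i) t = s i) /\
      (forall t' : F u, (forall i, res F (cover_le Hu i) t' = s i) -> t' = t).

Definition is_posheaf (X : frame) (F : presheaf X)
    (ord : forall u, F u -> F u -> Prop) : Prop :=
  is_sheaf F /\
  (forall u, partial_order (ord u)) /\
  (forall u v (p : fle v u) s t, ord u s t -> ord v (res F p s) (res F p t)) /\
  (forall (I : Type) (c : I -> X) (u : X)
                (Hu : u = fsup (fun w => exists i, w = c i)) s t,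
                (forall i, ord (c i) (res F (cover_le Hu i) s) (res F (cover_le Hu i) t)) ->
                ord u s t).

Definition sheaf_morph (X : frame) (F G : presheaf X) (a : forall u, F u -> G u) : Prop :=
  forall u v (p : fle v u) s, a v (res F p s) = res G p (a u s).

Definition op_morph (X : frame) (F G : presheaf X)
    (ordF : forall u, F u -> F u -> Prop) (ordG : forall u, G u -> G u -> Prop)
    (a : forall u, F u -> G u) : Prop :=
  forall u s t, ordF u s t -> ordG u (a u s) (a u t).

Definition bijective (A B : Type) (h : A -> B) : Prop :=
  (forall a b, h a = h b -> a = b) /\ (forall b, exists a, h a = b).

Section Gamma.
Variables (X Y : frame) (f : X -> Y).

Lemma restr_section u v s : fle v u -> is_section f u s -> is_section f v (restr s v).
Proof.
intros Hvu [[Hle [Htop [Hmeet Hsup]]] Hsec].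
split; [split; [|split; [|split]]|]; unfold restr.
- intro a; apply fmeet_r.
- rewrite Htop; apply meet_eq_r; exact Hvu.
- intros a b; rewrite Hmeet; apply meet_self_distr.
- intros S; rewrite Hsup, distr_r; apply sup_ext.
  + intros c [b [[x [Hx ->]] ->]]; apply fsup_ub; exists x; auto.
  + intros c [x [Hx ->]]; apply fsup_ub; exists (s x); split; auto; exists x; auto.
- intros x; rewrite Hsec, <- meetA, (meet_eq_r Hvu); reflexivity.
Qed.

Definition Gsec (u : X) := {s : Y -> X | is_section f u s}.

Definition Gres (u v : X) (p : fle v u) (a : Gsec u) : Gsec v :=
  exist _ (restr (proj1_sig a) v) (restr_section p (proj2_sig a)).

Lemma Gres_id u (p : fle u u) a : Gres p a = a.
Proof.
apply sig_eq; simpl; apply functional_extensionality; intro y; unfold restr.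
apply meet_eq_l; exact (proj1 (proj1 (proj2_sig a)) y).
Qed.

Lemma Gres_comp u v w (p : fle v u) (q : fle w v) (r : fle w u) a :
  Gres q (Gres p a) = Gres r a.
Proof.
apply sig_eq; simpl; apply functional_extensionality; intro y; unfold restr.
rewrite <- meetA, (meet_eq_r q); reflexivity.
Qed.

Definition Gamma : presheaf X :=
  {| sec := Gsec; res := Gres; res_id := Gres_id; res_comp := Gres_comp |}.

Definition Gamma_ord (ord : X -> (Y -> X) -> (Y -> X) -> Prop) :
    forall u, Gamma u -> Gamma u -> Prop :=
  fun u a b => ord u (proj1_sig a) (proj1_sig b).

End Gamma.

Lemma comp_section (X Y Z : frame) (f : X -> Y) (g : X -> Z) (phi : Z -> Y) u s :
  over_map f g phi -> is_section f u s -> is_section g u (fun z => s (phi z)).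
Proof.
intros [[Ptop [Pmeet Psup]] Pc] [[Hle [Htop [Hmeet Hsup]]] Hsec].
split; [split; [|split; [|split]]|].
- intro a; apply Hle.
- rewrite Ptop; exact Htop.
- intros a b; rewrite Pmeet; apply Hmeet.
- intros S; rewrite Psup, Hsup; apply sup_ext.
  + intros c [y [[x [Hx ->]] ->]]; apply fsup_ub; exists x; auto.
  + intros c [x [Hx ->]]; apply fsup_ub; exists (phi x); split; auto; exists x; auto.
- intros x; rewrite Pc; apply Hsec.
Qed.

Definition Gamma_mor (X Y Z : frame) (f : X -> Y) (g : X -> Z) (phi : Z -> Y)
    (H : over_map f g phi) : forall u, Gamma f u -> Gamma g u :=
  fun u a => exist _ (fun z => proj1_sig a (phi z)) (comp_section H (proj2_sig a)).

Section Lambda.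
Variables (X : frame) (F : presheaf X).

Definition LI := {u : X & F u}.

Definition eps (s t : LI) : X :=
  fsup (fun w => exists (p : fle w (projT1 s)) (q : fle w (projT1 t)),
                   res F p (projT2 s) = res F q (projT2 t)).

Lemma eps_le_l s t : fle (eps s t) (projT1 s).
Proof. apply fsup_lub; intros w [p [q _]]; exact p. Qed.
Lemma eps_le_r s t : fle (eps s t) (projT1 t).
Proof. apply fsup_lub; intros w [p [q _]]; exact q. Qed.

Definition Lcond (x : LI -> X) : Prop :=
  (forall s, fle (x s) (projT1 s)) /\
  (forall s t, fmeet (x s) (eps s t) = fmeet (x t) (eps s t)).

Definition Lcar := {x : LI -> X | Lcond x}.

Definition Lle (x y : Lcar) : Prop := forall s, fle (proj1_sig x s) (proj1_sig y s).

Lemma Lmeet_cond (x y : Lcar) : Lcond (fun s => fmeet (proj1_sig x s) (proj1_sig y s)).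
Proof.
destruct x as [x [Hx1 Hx2]], y as [y [Hy1 Hy2]]; simpl; split.
- intro s; eapply fle_trans; [apply fmeet_l|apply Hx1].
- intros s t; rewrite (meet_self_distr (x s)), (meet_self_distr (x t)), Hx2, Hy2; reflexivity.
Qed.

Definition Lmeet (x y : Lcar) : Lcar := exist _ _ (Lmeet_cond x y).

Lemma Lsup_cond (S : Lcar -> Prop) :
  Lcond (fun s => fsup (fun c => exists x, S x /\ c = proj1_sig x s)).
Proof.
split.
- intro s; apply fsup_lub; intros c [x [_ ->]]; apply (proj1 (proj2_sig x)).
- intros s t; rewrite !distr_r; apply sup_ext.
  + intros c [b [[x [Hx ->]] ->]]; rewrite (proj2 (proj2_sig x) s t); apply fsup_ub.
    exists (proj1_sig x t); split; auto; exists x; auto.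
  + intros c [b [[x [Hx ->]] ->]]; rewrite <- (proj2 (proj2_sig x) s t); apply fsup_ub.
    exists (proj1_sig x s); split; auto; exists x; auto.
Qed.

Definition Lsup (S : Lcar -> Prop) : Lcar := exist _ _ (Lsup_cond S).

Lemma Lle_refl a : Lle a a.
Proof. intro s; apply fle_refl. Qed.
Lemma Lle_trans a b c : Lle a b -> Lle b c -> Lle a c.
Proof. intros H1 H2 s; eapply fle_trans; [apply H1|apply H2]. Qed.
Lemma Lle_antisym a b : Lle a b -> Lle b a -> a = b.
Proof.
intros H1 H2; apply sig_eq, functional_extensionality; intro s; apply fle_antisym; auto.
Qed.
Lemma Lmeet_l a b : Lle (Lmeet a b) a.
Proof. intro s; apply fmeet_l. Qed.
Lemma Lmeet_r a b : Lle (Lmeet a b) b.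
Proof. intro s; apply fmeet_r. Qed.
Lemma Lmeet_glb a b c : Lle c a -> Lle c b -> Lle c (Lmeet a b).
Proof. intros H1 H2 s; apply fmeet_glb; auto. Qed.
Lemma Lsup_ub (S : Lcar -> Prop) a : S a -> Lle a (Lsup S).
Proof. intros H s; apply fsup_ub; exists a; auto. Qed.
Lemma Lsup_lub (S : Lcar -> Prop) b : (forall a, S a -> Lle a b) -> Lle (Lsup S) b.
Proof. intros H s; apply fsup_lub; intros c [x [Hx ->]]; apply H; exact Hx. Qed.
Lemma Ldistr a (S : Lcar -> Prop) :
  Lmeet a (Lsup S) = Lsup (fun c => exists b, S b /\ c = Lmeet a b).
Proof.
apply sig_eq, functional_extensionality; intro s; simpl; rewrite fdistr; apply sup_ext.
- intros c [b [[x [Hx ->]] ->]]; apply fsup_ub; exists (Lmeet a x); split.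
  + exists x; auto.
  + reflexivity.
- intros c [x [[b [Hb ->]] ->]]; apply fsup_ub; exists (proj1_sig b s); split.
  + exists b; auto.
  + reflexivity.
Qed.

Definition Lam : frame :=
  Frame Lle_refl Lle_trans Lle_antisym Lmeet_l Lmeet_r Lmeet_glb Lsup_ub Lsup_lub Ldistr.

Lemma Lproj_cond (u : X) : Lcond (fun s => fmeet u (projT1 s)).
Proof.
split.
- intro s; apply fmeet_r.
- intros s t; rewrite <- !meetA, (meet_eq_r (eps_le_l s t)), (meet_eq_r (eps_le_r s t)).
  reflexivity.
Qed.

Definition Lam_proj : X -> Lam := fun u => exist _ _ (Lproj_cond u).

(* p_s : down u_s -> Lambda(F), p_s^* = s-th projection *)
Definition psec (s : LI) : Lam -> X := fun x => proj1_sig x s.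

Definition Lam_ord (ord : forall u, F u -> F u -> Prop) :
    X -> (Lam -> X) -> (Lam -> X) -> Prop :=
  fun u sg tu => exists a b : F u,
    sg = psec (existT _ u a) /\ tu = psec (existT _ u b) /\ ord u a b.

Lemma Ltop_cond : Lcond (fun s => projT1 s).
Proof.
split.
- intro s; apply fle_refl.
- intros s t; rewrite (meet_eq_r (eps_le_l s t)), (meet_eq_r (eps_le_r s t)); reflexivity.
Qed.

Lemma psec_section (u : X) (a : F u) : is_section Lam_proj u (psec (existT _ u a)).
Proof.
split; [split; [|split; [|split]]|].
- intro x; apply (proj1 (proj2_sig x) (existT _ u a)).
- unfold psec, ftop; simpl; apply fle_antisym.
  + apply fsup_lub; intros c [x [_ ->]]; apply (proj1 (proj2_sig x) (existT _ u a)).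
  + apply fsup_ub; exists (exist _ _ Ltop_cond); split; [exact I|reflexivity].
- intros x y; reflexivity.
- intros S; reflexivity.
- intros x; reflexivity.
Qed.

(* the counit comparison F(u) -> Gamma(Lambda F)(u),  s |-> p_s *)
Definition kappa (u : X) (a : F u) : Gamma Lam_proj u :=
  exist _ (psec (existT _ u a)) (psec_section a).

End Lambda.

Arguments Lam {X} F.
Arguments Lam_proj {X} F.

Section LamMor.
Variables (X : frame) (F G : presheaf X) (al : forall u, F u -> G u).
Hypothesis Hal : sheaf_morph al.

Definition LIal (s : LI F) : LI G := existT _ (projT1 s) (al (projT2 s)).

Lemma eps_mono s t : fle (eps s t) (eps (LIal s) (LIal t)).
Proof.
apply fsup_lub; intros w [p [q H]]; apply fsup_ub; exists p, q; simpl.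
rewrite <- !Hal, H; reflexivity.
Qed.

Lemma Lmor_cond (y : Lam G) : Lcond (fun s => proj1_sig y (LIal s)).
Proof.
destruct y as [y [Hy1 Hy2]]; simpl; split.
- intro s; apply (Hy1 (LIal s)).
- intros s t.
  rewrite <- (meet_eq_r (eps_mono s t)), !meetA, Hy2; reflexivity.
Qed.

Definition Lam_mor : Lam G -> Lam F := fun y => exist _ _ (Lmor_cond y).

End LamMor.

Arguments Lam_mor {X F G al} Hal.

Section Theta.
Variables (X Y : frame) (f : X -> Y).

Lemma theta_cond (y : Y) :
  Lcond (F := Gamma f) (fun s => proj1_sig (projT2 s) y).
Proof.
split.
- intro s; exact (proj1 (proj1 (proj2_sig (projT2 s))) y).
- intros s t; unfold eps; rewrite !fdistr; apply sup_ext.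
  + intros c [w [[p [q H]] ->]].
    assert (E : restr (proj1_sig (projT2 s)) w = restr (proj1_sig (projT2 t)) w)
      by exact (f_equal (@proj1_sig _ _) H).
    apply fsup_ub; exists w; split; [exists p, q; exact H|].
    exact (f_equal (fun h => h y) E).
  + intros c [w [[p [q H]] ->]].
    assert (E : restr (proj1_sig (projT2 s)) w = restr (proj1_sig (projT2 t)) w)
      by exact (f_equal (@proj1_sig _ _) H).
    apply fsup_ub; exists w; split; [exists p, q; exact H|].
    symmetry; exact (f_equal (fun h => h y) E).
Qed.

Definition theta : Y -> Lam (Gamma f) := fun y => exist _ _ (theta_cond y).

End Theta.

Arguments is_posheaf {X} F ord.
Arguments Gamma_ord {X Y} f ord u a b.
Arguments kappa {X} F u a.
Arguments Gamma_mor {X Y Z f g phi} H u a.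

From Stdlib Require Import ProofIrrelevance FunctionalExtensionality Setoid.

Set Implicit Arguments.
Unset Strict Implicit.

(* The sheaf-level equivalence Sh(X) ~ LH/X is witnessed by kappa_F : F -> Gamma(Lambda F),
   a |-> p_a, and theta_f : Lambda(Gamma f) -> Y.  kappa is bijective since every section of
   Lambda(F) is glued from its values on the basic opens (eps(s,t))_t, hence is some p_a;
   theta is invertible since Y is covered by opens isomorphic to opens of X, each carrying a
   section of f against which opens of Lambda(Gamma f) can be tested.  The order of Lambda(F)
   is transported along kappa, which commutes with restriction, so (POS1-3) and (POSL1-3)
   translate into each other, and order-preservation of morphisms holds verbatim. *)

Section FrameFacts.
Variable L : frame.
Implicit Types a b c d : L.

Lemma fle_top a : fle a (ftop L).
Proof. apply fsup_ub; exact I. Qed.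

Lemma fmeet_le_l a b c : fle a c -> fle (fmeet a b) c.
Proof. intro H; exact (fle_trans (fmeet_l a b) H). Qed.

Lemma fmeet_le_r a b c : fle b c -> fle (fmeet a b) c.
Proof. intro H; exact (fle_trans (fmeet_r a b) H). Qed.

Lemma fmeet_mono a b c d : fle a b -> fle c d -> fle (fmeet a c) (fmeet b d).
Proof. intros H1 H2; apply fmeet_glb; [apply fmeet_le_l|apply fmeet_le_r]; assumption. Qed.

Lemma fsup_le_sup (P Q : L -> Prop) :
  (forall c, P c -> exists d, Q d /\ fle c d) -> fle (fsup P) (fsup Q).
Proof.
intros H; apply fsup_lub; intros c Hc; destruct (H c Hc) as [d [Hd Hcd]].
exact (fle_trans Hcd (fsup_ub Hd)).
Qed.

Lemma meet_hom_mono (M : frame) (h : M -> L) :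
  (forall x y, h (fmeet x y) = fmeet (h x) (h y)) ->
  forall x y, fle x y -> fle (h x) (h y).
Proof. intros Hm x y Hxy; rewrite <- (meet_eq_l Hxy), Hm; apply fmeet_r. Qed.

Lemma meet_sup_cover a (I : Type) (c : I -> L) :
  fle a (fsup (fun w => exists i, w = c i)) ->
  a = fsup (fun w => exists i, w = fmeet a (c i)).
Proof.
intro Ha; rewrite <- (meet_eq_l Ha) at 1; rewrite fdistr; apply sup_ext.
- intros z [b [[i ->] ->]]; apply fsup_ub; exists i; reflexivity.
- intros z [i ->]; apply fsup_ub; exists (c i); split; [exists i|]; reflexivity.
Qed.

End FrameFacts.

Lemma frame_hom_inverse (A B : frame) (h : A -> B) (k : B -> A) :
  frame_hom h -> (forall a, k (h a) = a) -> (forall b, h (k b) = b) -> frame_hom k.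
Proof.
intros [Ht [Hm Hs]] Hkh Hhk; split; [|split].
- rewrite <- Ht; apply Hkh.
- intros a b; rewrite <- (Hhk a), <- (Hhk b), <- Hm, !Hkh; reflexivity.
- intro S; rewrite <- (Hkh (fsup (fun y => exists x, S x /\ y = k x))), Hs; f_equal.
  apply sup_ext.
  + intros c Hc; apply fsup_ub; exists (k c); split; [exists c; auto|]; rewrite Hhk; reflexivity.
  + intros c [y [[x [Hx ->]] ->]]; rewrite Hhk; apply fsup_ub; exact Hx.
Qed.

Section SheafFacts.
Variables (X : frame) (F : presheaf X).

Lemma res_irr u v (p q : fle v u) (s : F u) : res F p s = res F q s.
Proof. rewrite (proof_irrelevance _ p q); reflexivity. Qed.

Lemma res_res u v w (p : fle v u) (q : fle w v) (s : F u) :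
  res F q (res F p s) = res F (fle_trans q p) s.
Proof. apply res_comp. Qed.

Lemma eps_ge (s t : LI F) (w : X) (p : fle w (projT1 s)) (q : fle w (projT1 t)) :
  res F p (projT2 s) = res F q (projT2 t) -> fle w (eps s t).
Proof. intro H; apply fsup_ub; exists p, q; exact H. Qed.

Lemma eps_sym (s t : LI F) : eps s t = eps t s.
Proof. unfold eps; apply sup_ext; intros z [p [q H]]; apply fsup_ub; exists q, p; auto. Qed.

Lemma eps_self (s : LI F) : eps s s = projT1 s.
Proof.
apply fle_antisym; [apply eps_le_l|].
apply fsup_ub; exists (fle_refl _), (fle_refl _); reflexivity.
Qed.

Hypothesis HF : is_sheaf F.

Lemma sheaf_separated (I : Type) (c : I -> X) (u : X)
  (Hu : u = fsup (fun w => exists i, w = c i)) (a b : F u) :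
  (forall i, res F (cover_le Hu i) a = res F (cover_le Hu i) b) -> a = b.
Proof.
intros H.
set (sf := fun i => res F (cover_le Hu i) a).
assert (Hc : forall i j,
    res F (fmeet_l (c i) (c j)) (sf i) = res F (fmeet_r (c i) (c j)) (sf j)).
{ intros i j; unfold sf; rewrite !res_res; apply res_irr. }
destruct (HF Hu Hc) as [t [_ Huniq]].
rewrite (Huniq a (fun i => eq_refl)), (Huniq b (fun i => eq_sym (H i))); reflexivity.
Qed.

(* [eps s t] is a join of opens on which [s] and [t] agree; gluing makes them agree on the join. *)
Lemma eps_agree (s t : LI F) (w : X) (p : fle w (projT1 s)) (q : fle w (projT1 t)) :
  fle w (eps s t) -> res F p (projT2 s) = res F q (projT2 t).
Proof.
intros Hw.
set (I := {w' : X | exists (p' : fle w' (projT1 s)) (q' : fle w' (projT1 t)),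
                      res F p' (projT2 s) = res F q' (projT2 t)}).
assert (Hu : w = fsup (fun z => exists i : I, z = fmeet w (proj1_sig i))).
{ apply meet_sup_cover, (fle_trans Hw), fsup_le_sup.
  intros z [p' [q' H]]; exists z; split; [|apply fle_refl].
  exists (exist _ z (ex_intro _ p' (ex_intro _ q' H))); reflexivity. }
apply (sheaf_separated (Hu := Hu)); intros [b Hb]; rewrite !res_res.
generalize (fle_trans (cover_le Hu (exist _ b Hb)) p) (fle_trans (cover_le Hu (exist _ b Hb)) q).
simpl; destruct Hb as [p' [q' H]]; intros p1 q1.
assert (Hwb : fle (fmeet w b) b) by apply fmeet_r.
rewrite (res_irr p1 (fle_trans Hwb p')), (res_irr q1 (fle_trans Hwb q')), <- !res_res, H.
reflexivity.
Qed.

Lemma eps_trans (s t r : LI F) : fle (fmeet (eps s t) (eps t r)) (eps s r).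
Proof.
set (w := fmeet (eps s t) (eps t r)).
assert (H1 : fle w (eps s t)) by apply fmeet_l.
assert (H2 : fle w (eps t r)) by apply fmeet_r.
pose proof (fle_trans H1 (eps_le_l s t)) as ps.
pose proof (fle_trans H1 (eps_le_r s t)) as pt.
pose proof (fle_trans H2 (eps_le_r t r)) as pr.
apply eps_ge with (p := ps) (q := pr).
rewrite (eps_agree ps pt H1); apply eps_agree; exact H2.
Qed.

End SheafFacts.

Section Sections.
Variables (X Y : frame) (f : X -> Y) (u : X) (s : Y -> X).
Hypothesis Hs : is_section f u s.

Lemma section_le y : fle (s y) u.
Proof. exact (proj1 (proj1 Hs) y). Qed.

Lemma section_top : s (ftop Y) = u.
Proof. exact (proj1 (proj2 (proj1 Hs))). Qed.

Lemma section_meet y y' : s (fmeet y y') = fmeet (s y) (s y').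
Proof. exact (proj1 (proj2 (proj2 (proj1 Hs))) y y'). Qed.

Lemma section_sup S : s (fsup S) = fsup (fun z => exists y, S y /\ z = s y).
Proof. exact (proj2 (proj2 (proj2 (proj1 Hs))) S). Qed.

Lemma section_base x : s (f x) = fmeet x u.
Proof. exact (proj2 Hs x). Qed.

Lemma section_mono y y' : fle y y' -> fle (s y) (s y').
Proof. apply meet_hom_mono, section_meet. Qed.

End Sections.

Lemma Gamma_ext (X Y : frame) (f : X -> Y) u (a b : Gamma f u) :
  (forall y, proj1_sig a y = proj1_sig b y) -> a = b.
Proof. intro H; apply sig_eq, functional_extensionality; exact H. Qed.

Section Glue.
Variables (X Y : frame) (f : X -> Y) (I : Type) (c : I -> X) (u : X).
Variable s : I -> Y -> X.
Hypothesis Hu : u = fsup (fun w => exists i, w = c i).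
Hypothesis Hsec : forall i, is_section f (c i) (s i).
Hypothesis Hcomp : forall i j y, fmeet (s i y) (c j) = fmeet (s j y) (c i).

Definition glue (y : Y) : X := fsup (fun z => exists i, z = s i y).

Lemma glue_restr i y : fmeet (glue y) (c i) = s i y.
Proof.
transitivity (fmeet (s i y) u).
- unfold glue; rewrite distr_r, Hu, fdistr; apply sup_ext.
  + intros z [b [[j ->] ->]]; rewrite Hcomp; apply fsup_ub; exists (c j); split; [exists j|]; reflexivity.
  + intros z [b [[j ->] ->]]; rewrite <- Hcomp; apply fsup_ub; exists (s j y); split; [exists j|]; reflexivity.
- apply meet_eq_l; exact (fle_trans (section_le (Hsec i) y) (cover_le Hu i)).
Qed.

Lemma glue_meet y y' : glue (fmeet y y') = fmeet (glue y) (glue y').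
Proof.
apply fle_antisym.
- apply fsup_lub; intros z [i ->]; rewrite (section_meet (Hsec i)).
  apply fmeet_mono; apply fsup_ub; exists i; reflexivity.
- unfold glue at 1; rewrite distr_r; apply fsup_lub; intros z [b [[i ->] ->]].
  assert (E : fmeet (s i y) (glue y') = s i (fmeet y y')).
  { rewrite <- (meet_eq_l (section_le (Hsec i) y)), <- meetA, (meetC (c i)), glue_restr.
    symmetry; apply (section_meet (Hsec i)). }
  rewrite E; apply fsup_ub; exists i; reflexivity.
Qed.

Lemma glue_section : is_section f u glue.
Proof.
split; [split; [|split; [|split; [exact glue_meet|]]]|].
- intro y; apply fsup_lub; intros z [i ->].
  exact (fle_trans (section_le (Hsec i) y) (cover_le Hu i)).
- unfold glue; rewrite Hu; apply sup_ext; intros z [i ->];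
    apply fsup_ub; exists i; rewrite (section_top (Hsec i)); reflexivity.
- intro S; apply fle_antisym.
  + apply fsup_lub; intros z [i ->]; rewrite (section_sup (Hsec i)); apply fsup_lub.
    intros w [y [Hy ->]]; apply fle_trans with (b := glue y).
    * apply fsup_ub; exists i; reflexivity.
    * apply fsup_ub; exists y; split; [exact Hy|reflexivity].
  + apply fsup_lub; intros z [y [Hy ->]]; apply fsup_lub; intros w [i ->].
    apply fle_trans with (b := s i (fsup S)).
    * apply (section_mono (Hsec i)), fsup_ub; exact Hy.
    * apply fsup_ub; exists i; reflexivity.
- intro x; unfold glue; rewrite Hu, fdistr; apply sup_ext.
  + intros z [i ->]; rewrite (section_base (Hsec i)); apply fsup_ub; exists (c i); split; [exists i|]; reflexivity.
  + intros z [b [[i ->] ->]]; apply fsup_ub; exists i; rewrite (section_base (Hsec i)); reflexivity.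
Qed.

End Glue.

Lemma section_cover (X Y : frame) (f : X -> Y) (I : Type) (c : I -> X) (u : X) t :
  u = fsup (fun w => exists i, w = c i) -> is_section f u t ->
  forall y, t y = fsup (fun z => exists i, z = fmeet (t y) (c i)).
Proof.
intros Hu Ht y; apply meet_sup_cover; rewrite <- Hu; apply (section_le Ht).
Qed.

Lemma Gamma_sheaf (X Y : frame) (f : X -> Y) : is_sheaf (Gamma f).
Proof.
intros I c u Hu s Hs.
set (sv := fun i => proj1_sig (s i)).
assert (Hsec : forall i, is_section f (c i) (sv i)) by (intro i; exact (proj2_sig (s i))).
assert (Hcomp : forall i j y, fmeet (sv i y) (c j) = fmeet (sv j y) (c i)).
{ intros i j y.
  pose proof (f_equal (fun a => proj1_sig a y) (Hs i j)) as E; simpl in E.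
  unfold restr in E; fold (sv i) (sv j) in E.
  rewrite <- (meet_eq_l (section_le (Hsec i) y)) at 1.
  rewrite <- (meet_eq_l (section_le (Hsec j) y)) at 1.
  rewrite <- !meetA, E, (meetC (c i)); reflexivity. }
exists (exist _ _ (glue_section Hu Hsec Hcomp)); split.
- intro i; apply Gamma_ext; intro y; apply (glue_restr Hu Hsec Hcomp).
- intros t' Ht'; apply Gamma_ext; intro y; simpl.
  assert (Hi : forall i, fmeet (proj1_sig t' y) (c i) = sv i y)
    by (intro i; exact (f_equal (fun a => proj1_sig a y) (Ht' i))).
  rewrite (section_cover Hu (proj2_sig t')); apply sup_ext; intros z [i ->];
    apply fsup_ub; exists i; rewrite Hi; reflexivity.
Qed.

Section LambdaFrame.
Variables (X : frame) (F : presheaf X).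

Lemma Lam_ext (x y : Lam F) : (forall s, proj1_sig x s = proj1_sig y s) -> x = y.
Proof. intro H; apply sig_eq, functional_extensionality; exact H. Qed.

Lemma Lam_top_at (t : LI F) : proj1_sig (ftop (Lam F)) t = projT1 t.
Proof.
simpl; apply fle_antisym.
- apply fsup_lub; intros c [x [_ ->]]; apply (proj1 (proj2_sig x)).
- apply fsup_ub; exists (exist _ _ (Ltop_cond F)); split; [exact I|reflexivity].
Qed.

Lemma Lam_at_eps (x : Lam F) (s t : LI F) :
  fle (fmeet (proj1_sig x t) (eps s t)) (proj1_sig x s).
Proof. rewrite <- (proj2 (proj2_sig x) s t); apply fmeet_l. Qed.

Lemma Lam_proj_hom : frame_hom (Lam_proj F).
Proof.
split; [|split].
- apply Lam_ext; intro s; rewrite Lam_top_at; simpl; apply meet_eq_r, fle_top.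
- intros a b; apply Lam_ext; intro s; simpl; apply meet_self_distr.
- intro S; apply Lam_ext; intro s; simpl; rewrite distr_r; apply sup_ext.
  + intros z [b [Hb ->]]; apply fsup_ub; exists (Lam_proj F b); split; [exists b; auto|reflexivity].
  + intros z [x [[b [Hb ->]] ->]]; apply fsup_ub; exists b; auto.
Qed.

Hypothesis HF : is_sheaf F.

(* The image of the section [p_s] in [Lambda(F)]: the open [(eps s t)_t]. *)
Lemma Lam_basic_cond (s : LI F) : Lcond (F := F) (fun t => eps s t).
Proof.
split.
- intro t; apply eps_le_r.
- intros t r; apply fle_antisym; apply fmeet_glb; try apply fmeet_r.
  + apply (eps_trans HF).
  + rewrite (eps_sym t r); apply (eps_trans HF).
Qed.

Definition Lam_basic (s : LI F) : Lam F := exist _ _ (Lam_basic_cond s).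

Lemma Lam_top_basic : ftop (Lam F) = fsup (fun b => exists s, b = Lam_basic s).
Proof.
apply fle_antisym; [|apply fle_top].
intro t; rewrite Lam_top_at; simpl.
apply fsup_ub; exists (Lam_basic t); split; [exists t; reflexivity|].
simpl; symmetry; apply eps_self.
Qed.

Lemma Lam_meet_basic (x : Lam F) (s : LI F) :
  fmeet x (Lam_basic s) = fmeet (Lam_proj F (proj1_sig x s)) (Lam_basic s).
Proof.
apply Lam_ext; intro t; simpl.
rewrite <- meetA, (meet_eq_r (eps_le_r s t)), (proj2 (proj2_sig x) s t); reflexivity.
Qed.

Lemma psec_restr u v (p : fle v u) (a : F u) :
  restr (psec (existT _ u a)) v = psec (existT (fun w => F w) v (res F p a)).
Proof.
apply functional_extensionality; intro x; unfold restr, psec.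
assert (E : eps (existT (fun w => F w) u a) (existT _ v (res F p a)) = v).
{ apply fle_antisym; [apply eps_le_r|].
  apply eps_ge with (p := p) (q := fle_refl v); simpl; rewrite res_id; reflexivity. }
rewrite <- E at 1; rewrite (proj2 (proj2_sig x)), E.
apply meet_eq_l; apply (proj1 (proj2_sig x) (existT _ v (res F p a))).
Qed.

Lemma psec_inj u (a b : F u) :
  psec (existT (fun w => F w) u a) = psec (existT _ u b) -> a = b.
Proof.
intro H; pose proof (f_equal (fun h => h (Lam_basic (existT _ u a))) H) as E.
unfold psec in E; simpl in E; rewrite eps_self in E; simpl in E.
pose proof (eps_agree HF (s := existT _ u a) (t := existT _ u b) (fle_refl u) (fle_refl u)) as A.
simpl in A; rewrite !res_id in A; apply A; rewrite <- E; apply fle_refl.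
Qed.

Section SectionOfLambda.
Variables (u : X) (sg : Lam F -> X).
Hypothesis Hsg : is_section (Lam_proj F) u sg.

Lemma section_basic_le s : fle (sg (Lam_basic s)) (projT1 s).
Proof.
apply fle_trans with (b := sg (Lam_proj F (projT1 s))).
- apply (section_mono Hsg); intro t; simpl; apply fmeet_glb; [apply eps_le_l|apply eps_le_r].
- rewrite (section_base Hsg); apply fmeet_l.
Qed.

Lemma section_basic_cover : u = fsup (fun w => exists s, w = sg (Lam_basic s)).
Proof.
rewrite <- (section_top Hsg), Lam_top_basic, (section_sup Hsg); apply sup_ext.
- intros c [x [[s ->] ->]]; apply fsup_ub; exists s; reflexivity.
- intros c [s ->]; apply fsup_ub; exists (Lam_basic s); split; [exists s|]; reflexivity.
Qed.

Lemma section_basic_eps s t :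
  fle (fmeet (sg (Lam_basic s)) (sg (Lam_basic t))) (eps s t).
Proof.
rewrite <- (section_meet Hsg).
apply fle_trans with (b := sg (Lam_proj F (eps s t))).
- apply (section_mono Hsg); intro r; simpl; apply fmeet_glb.
  + rewrite (eps_sym t r); apply (eps_trans HF).
  + apply fmeet_le_l, eps_le_r.
- rewrite (section_base Hsg); apply fmeet_l.
Qed.

Lemma section_expand x :
  sg x = fsup (fun y => exists s, y = fmeet (proj1_sig x s) (sg (Lam_basic s))).
Proof.
rewrite <- (meet_eq_l (fle_top x)) at 1; rewrite Lam_top_basic, fdistr, (section_sup Hsg).
apply sup_ext.
- intros c [b [[b' [[s ->] ->]] ->]]; apply fsup_ub; exists s.
  rewrite Lam_meet_basic, (section_meet Hsg), (section_base Hsg), <- meetA,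
    (meet_eq_r (section_le Hsg _)); reflexivity.
- intros c [s ->]; apply fsup_ub; exists (fmeet x (Lam_basic s)); split.
  + exists (Lam_basic s); split; [exists s|]; reflexivity.
  + rewrite Lam_meet_basic, (section_meet Hsg), (section_base Hsg), <- meetA,
      (meet_eq_r (section_le Hsg _)); reflexivity.
Qed.

(* The germs of the [s] on the cover [sg (Lam_basic s)] of [u] are compatible by
   [section_basic_eps]; the glued element of [F u] is the section sought. *)
Lemma section_is_psec : exists a : F u, sg = psec (existT _ u a).
Proof.
set (Hcover := section_basic_cover).
set (sf := fun s => res F (section_basic_le s) (projT2 s)).
assert (Hc : forall s t, res F (fmeet_l (sg (Lam_basic s)) (sg (Lam_basic t))) (sf s)
                       = res F (fmeet_r (sg (Lam_basic s)) (sg (Lam_basic t))) (sf t)).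
{ intros s t; unfold sf; rewrite !res_res; apply (eps_agree HF), section_basic_eps. }
destruct (HF Hcover Hc) as [a [Ha _]].
assert (Hle : forall s, fle (sg (Lam_basic s)) (eps (existT _ u a) s))
  by (intro s; apply eps_ge with (p := cover_le Hcover s) (q := section_basic_le s); apply Ha).
exists a; apply functional_extensionality; intro x.
assert (E : forall s, fmeet (proj1_sig x s) (sg (Lam_basic s))
                    = fmeet (proj1_sig x (existT _ u a)) (sg (Lam_basic s))).
{ intro s; rewrite <- (meet_eq_r (Hle s)), !meetA, (proj2 (proj2_sig x) (existT _ u a) s).
  reflexivity. }
rewrite section_expand; unfold psec.
rewrite (meet_sup_cover (c := fun s => sg (Lam_basic s)) (a := proj1_sig x (existT _ u a))).
- apply sup_ext; intros c [s ->]; apply fsup_ub; exists s; rewrite E; reflexivity.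
- rewrite <- Hcover; apply (proj1 (proj2_sig x) (existT _ u a)).
Qed.

End SectionOfLambda.

Ltac solve_meet_le := match goal with
 | |- fle _ (fmeet _ _) => apply fmeet_glb; solve_meet_le
 | |- fle ?a ?a => apply fle_refl
 | |- fle (fmeet ?a ?b) ?c => first [apply fmeet_le_l; solve_meet_le | apply fmeet_le_r; solve_meet_le]
 | _ => first [apply eps_le_l | apply eps_le_r | assumption]
end.

Lemma Lam_basic_piece (s : LI F) :
  open_iso_piece (Lam_proj F) (Lam_basic s).
Proof.
exists (projT1 s), (fun x => fmeet (Lam_proj F x) (Lam_basic s)), (fun y => proj1_sig y s).
split; [|split; [|split; [|split; [|split; [|split]]]]].
- intros x _; apply fmeet_r.
- intros y _; apply (proj1 (proj2_sig y) s).
- intros x Hx; simpl; rewrite eps_self, <- meetA, (meet_eq_l (fle_refl _)); apply meet_eq_l; exact Hx.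
- intros y Hy; apply Lam_ext; intro t; simpl.
  rewrite <- meetA, (meet_eq_r (eps_le_r s t)), (proj2 (proj2_sig y) s t).
  apply meet_eq_l; apply Hy.
- intros x x' _ _ H; apply fmeet_mono; [|apply fle_refl].
  intro t; simpl; apply fmeet_mono; [exact H|apply fle_refl].
- intros y y' _ _ H; apply H.
- intro x; apply Lam_ext; intro t; simpl; apply fle_antisym; solve_meet_le.
Qed.

Lemma Lam_local_homeo : local_homeo (Lam_proj F).
Proof.
split; [exact Lam_proj_hom|].
apply fle_antisym; [apply fle_top|].
rewrite Lam_top_basic; apply fsup_le_sup; intros c [s ->].
exists (Lam_basic s); split; [apply Lam_basic_piece|apply fle_refl].
Qed.

End LambdaFrame.

Lemma Lam_mor_over (X : frame) (F G : presheaf X) (al : forall u, F u -> G u)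
    (Hal : sheaf_morph al) :
  over_map (Lam_proj F) (Lam_proj G) (Lam_mor Hal).
Proof.
split; [split; [|split]|].
- apply Lam_ext; intro s; rewrite Lam_top_at.
  change (proj1_sig (ftop (Lam G)) (LIal al s) = projT1 s); rewrite Lam_top_at; reflexivity.
- intros a b; apply Lam_ext; intro s; reflexivity.
- intro S; apply Lam_ext; intro s; simpl; apply sup_ext.
  + intros z [x [Hx ->]]; apply fsup_ub; exists (Lam_mor Hal x); split; [exists x; auto|reflexivity].
  + intros z [y [[x [Hx ->]] ->]]; apply fsup_ub; exists x; auto.
- intro x; apply Lam_ext; intro s; reflexivity.
Qed.

Record iso_piece (X Y : frame) (f : X -> Y) (a : Y) (v : X) (g : X -> Y) (h : Y -> X)
    : Prop := IsoPiece {
  piece_g_le : forall x, fle x v -> fle (g x) a;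
  piece_h_le : forall y, fle y a -> fle (h y) v;
  piece_hg : forall x, fle x v -> h (g x) = x;
  piece_gh : forall y, fle y a -> g (h y) = y;
  piece_g_mono : forall x x', fle x v -> fle x' v -> fle x x' -> fle (g x) (g x');
  piece_h_mono : forall y y', fle y a -> fle y' a -> fle y y' -> fle (h y) (h y');
  piece_over : forall x, g (fmeet x v) = fmeet (f x) a
}.

Lemma open_iso_pieceP (X Y : frame) (f : X -> Y) (a : Y) :
  open_iso_piece f a -> exists v g h, iso_piece f a v g h.
Proof.
intros [v [g [h [H1 [H2 [H3 [H4 [H5 [H6 H7]]]]]]]]]; exists v, g, h; constructor; assumption.
Qed.

(* An open [a] of [Y] mapped isomorphically onto an open [v] of [X] carries the
   section [y |-> h (y /\ a)] of [f] over [v], with which every section of [f] agrees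
   on its part over [a]. *)
Section Piece.
Variables (X Y : frame) (f : X -> Y) (a : Y) (v : X) (g : X -> Y) (h : Y -> X).
Hypothesis P : iso_piece f a v g h.

Lemma piece_g_top : g v = a.
Proof.
apply fle_antisym; [apply (piece_g_le P), fle_refl|].
rewrite <- (piece_gh P (fle_refl a)) at 1.
apply (piece_g_mono P); [apply (piece_h_le P), fle_refl|apply fle_refl|apply (piece_h_le P), fle_refl].
Qed.

Lemma piece_le_base : fle a (f v).
Proof.
pose proof (piece_over P v) as E; rewrite (meet_eq_l (fle_refl v)), piece_g_top in E.
rewrite E; apply fmeet_l.
Qed.

Lemma piece_gE z : fle z v -> g z = fmeet (f z) a.
Proof. intro H; rewrite <- (meet_eq_l H) at 1; apply (piece_over P). Qed.

Lemma piece_h_meet p q : fle p a -> fle q a -> h (fmeet p q) = fmeet (h p) (h q).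
Proof.
intros Hp Hq; assert (Hpq : fle (fmeet p q) a) by (apply fmeet_le_l; exact Hp).
apply fle_antisym.
- apply fmeet_glb; apply (piece_h_mono P); auto; [apply fmeet_l|apply fmeet_r].
- assert (Hr : fle (fmeet (h p) (h q)) v) by (apply fmeet_le_l, (piece_h_le P), Hp).
  rewrite <- (piece_hg P Hr); apply (piece_h_mono P); auto; [apply (piece_g_le P), Hr|].
  apply fmeet_glb.
  + rewrite <- (piece_gh P Hp) at 2; apply (piece_g_mono P); auto;
      [apply (piece_h_le P), Hp|apply fmeet_l].
  + rewrite <- (piece_gh P Hq) at 2; apply (piece_g_mono P); auto;
      [apply (piece_h_le P), Hq|apply fmeet_r].
Qed.

Lemma piece_h_sup (T : Y -> Prop) : (forall y, T y -> fle y a) ->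
  h (fsup T) = fsup (fun z => exists y, T y /\ z = h y).
Proof.
intros HT; assert (Ha : fle (fsup T) a) by (apply fsup_lub; exact HT).
assert (Hr : fle (fsup (fun z => exists y, T y /\ z = h y)) v).
{ apply fsup_lub; intros z [y [Hy ->]]; apply (piece_h_le P), HT, Hy. }
apply fle_antisym.
- rewrite <- (piece_hg P Hr); apply (piece_h_mono P); auto; [apply (piece_g_le P), Hr|].
  apply fsup_lub; intros y Hy; rewrite <- (piece_gh P (HT y Hy)).
  apply (piece_g_mono P); auto; [apply (piece_h_le P), HT, Hy|].
  apply fsup_ub; exists y; auto.
- apply fsup_lub; intros z [y [Hy ->]]; apply (piece_h_mono P); auto; apply fsup_ub; exact Hy.
Qed.

Definition piece_sec (y : Y) : X := h (fmeet y a).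

Lemma piece_sec_section : is_section f v piece_sec.
Proof.
unfold piece_sec; split; [split; [|split; [|split]]|].
- intro y; apply (piece_h_le P), fmeet_r.
- rewrite (meet_eq_r (fle_top a)), <- piece_g_top, (piece_hg P); [reflexivity|apply fle_refl].
- intros y y'; rewrite <- piece_h_meet; try apply fmeet_r; f_equal.
  apply meet_self_distr.
- intro S; rewrite distr_r, piece_h_sup.
  + apply sup_ext.
    * intros z [w [[b [Hb ->]] ->]]; apply fsup_ub; exists b; auto.
    * intros z [y [Hy ->]]; apply fsup_ub; exists (fmeet y a); split; auto; exists y; auto.
  + intros y [b [_ ->]]; apply fmeet_r.
- intro x; rewrite <- (piece_over P), (piece_hg P); [reflexivity|apply fmeet_r].
Qed.

Definition piece_germ : LI (Gamma f) := existT _ v (exist _ _ piece_sec_section).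

Lemma section_piece_le w t : is_section f w t -> fle (t a) v.
Proof.
intro Ht; apply fle_trans with (b := t (f v)).
- apply (section_mono Ht), piece_le_base.
- rewrite (section_base Ht); apply fmeet_l.
Qed.

Lemma section_piece_agree w t (Ht : is_section f w t) :
  fle (t a) (eps piece_germ (existT (fun u => Gamma f u) w (exist _ t Ht))).
Proof.
apply eps_ge with (p := section_piece_le Ht) (q := section_le Ht a).
apply Gamma_ext; intro y; simpl; unfold restr, piece_sec.
rewrite <- (section_meet Ht).
assert (Hz : fle (h (fmeet y a)) v) by apply (piece_h_le P), fmeet_r.
rewrite <- (piece_gh P (fmeet_r y a)) at 2; rewrite (piece_gE Hz), (section_meet Ht), (section_base Ht).
rewrite <- meetA, (meet_eq_r (section_le Ht a)); reflexivity.
Qed.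

End Piece.

Section Theta.
Variables (X Y : frame) (f : X -> Y).

Lemma theta_frame_hom : frame_hom (theta f).
Proof.
split; [|split].
- apply Lam_ext; intro s; rewrite Lam_top_at; apply (section_top (proj2_sig (projT2 s))).
- intros a b; apply Lam_ext; intro s; apply (section_meet (proj2_sig (projT2 s))).
- intro S; apply Lam_ext; intro s; simpl; rewrite (section_sup (proj2_sig (projT2 s))).
  apply sup_ext.
  + intros z [y [Hy ->]]; apply fsup_ub; exists (theta f y); split; [exists y; auto|reflexivity].
  + intros z [x [[y [Hy ->]] ->]]; apply fsup_ub; exists y; auto.
Qed.

Lemma theta_over : over_map (Lam_proj (Gamma f)) f (theta f).
Proof.
split; [exact theta_frame_hom|].
intro x; apply Lam_ext; intro s; apply (section_base (proj2_sig (projT2 s))).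
Qed.

Section PieceOfTheta.
Variables (a : Y) (v : X) (g : X -> Y) (h : Y -> X).
Hypothesis P : iso_piece f a v g h.
Variable x : Lam (Gamma f).

Lemma theta_piece_le : fle (theta f (g (proj1_sig x (piece_germ P)))) x.
Proof.
set (z0 := proj1_sig x (piece_germ P)).
assert (Hz0 : fle z0 v) by apply (proj1 (proj2_sig x) (piece_germ P)).
intros [w [t Ht]]; simpl.
rewrite (piece_gE P Hz0), (section_meet Ht), (section_base Ht).
eapply fle_trans; [|apply Lam_at_eps with (t := piece_germ P)].
rewrite eps_sym; apply fmeet_mono; [apply fmeet_l|apply (section_piece_agree P)].
Qed.

Lemma Lam_at_piece_le w t (Ht : is_section f w t) :
  fle (fmeet (proj1_sig x (existT _ w (exist _ t Ht))) (t a))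
      (t (g (proj1_sig x (piece_germ P)))).
Proof.
set (s := existT (fun u => Gamma f u) w (exist _ t Ht)).
assert (Hz0 : fle (proj1_sig x (piece_germ P)) v) by apply (proj1 (proj2_sig x) (piece_germ P)).
rewrite (piece_gE P Hz0), (section_meet Ht), (section_base Ht).
apply fmeet_glb; [apply fmeet_glb|apply fmeet_r].
- eapply fle_trans; [|apply Lam_at_eps with (t := s)].
  apply fmeet_mono; [apply fle_refl|apply (section_piece_agree P)].
- apply fmeet_le_l, (proj1 (proj2_sig x) s).
Qed.

End PieceOfTheta.

Hypothesis Hloc : local_homeo f.

Lemma section_piece_cover w t : is_section f w t ->
  w = fsup (fun z => exists a : {a | open_iso_piece f a}, z = t (proj1_sig a)).
Proof.
intro Ht; rewrite <- (section_top Ht), <- (proj2 Hloc), (section_sup Ht); apply sup_ext.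
- intros z [a [Ha ->]]; apply fsup_ub; exists (exist _ a Ha); reflexivity.
- intros z [[a Ha] ->]; apply fsup_ub; exists a; auto.
Qed.

Lemma theta_reflect_le y y' : fle (theta f y') (theta f y) -> fle y' y.
Proof.
intro H; rewrite <- (meet_eq_l (fle_top y')), <- (proj2 Hloc), fdistr.
apply fsup_lub; intros z [a [Ha ->]].
destruct (open_iso_pieceP Ha) as [v [g [h P]]].
pose proof (H (piece_germ P)) as E; simpl in E; unfold piece_sec in E.
rewrite <- (piece_gh P (fmeet_r y' a)).
apply fle_trans with (b := g (h (fmeet y a))).
- apply (piece_g_mono P); try (apply (piece_h_le P), fmeet_r); exact E.
- rewrite (piece_gh P (fmeet_r y a)); apply fmeet_l.
Qed.

Definition psi (x : Lam (Gamma f)) : Y := fsup (fun y => fle (theta f y) x).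

Lemma psi_theta y : psi (theta f y) = y.
Proof.
apply fle_antisym.
- apply fsup_lub; intros y' H; apply theta_reflect_le; exact H.
- apply fsup_ub; apply fle_refl.
Qed.

Lemma theta_psi x : theta f (psi x) = x.
Proof.
apply fle_antisym.
- unfold psi; rewrite (proj2 (proj2 theta_frame_hom)).
  apply fsup_lub; intros z [y [Hy ->]]; exact Hy.
- intros [w [t Ht]]; simpl; unfold psi; rewrite (section_sup Ht).
  rewrite (meet_sup_cover (c := fun a : {a | open_iso_piece f a} => t (proj1_sig a))).
  + apply fsup_lub; intros z [[a Ha] ->]; simpl.
    destruct (open_iso_pieceP Ha) as [v [g [h P]]].
    eapply fle_trans; [apply (Lam_at_piece_le P)|].
    apply fsup_ub; exists (g (proj1_sig x (piece_germ P))); split; [|reflexivity].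
    apply theta_piece_le.
  + rewrite <- (section_piece_cover Ht); apply (proj1 (proj2_sig x)).
Qed.

Lemma psi_over : over_map f (Lam_proj (Gamma f)) psi.
Proof.
split.
- exact (frame_hom_inverse theta_frame_hom psi_theta theta_psi).
- intro x; rewrite <- (proj2 theta_over x); apply psi_theta.
Qed.

End Theta.

Lemma Gamma_posheaf (X Y : frame) (f : X -> Y) (ord : X -> (Y -> X) -> (Y -> X) -> Prop) :
  is_POLH f ord -> is_posheaf (Gamma f) (Gamma_ord f ord).
Proof.
intros [_ [P1 [P2 P3]]]; split; [apply Gamma_sheaf|split; [|split]].
- intro u; destruct (P1 u) as [R [A T]]; split; [|split].
  + intro a; apply R, (proj2_sig a).
  + intros a b H1 H2; apply sig_eq, A; auto; apply proj2_sig.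
  + intros a b c H1 H2; eapply T; eauto; apply proj2_sig.
- intros u v p a b H; exact (P2 u v _ _ p (proj2_sig a) (proj2_sig b) H).
- intros I c u Hu a b H; apply (P3 I c u _ _ Hu (proj2_sig a) (proj2_sig b) H).
Qed.

Lemma Gamma_mor_sheaf_morph (X Y Z : frame) (f : X -> Y) (g : X -> Z) (phi : Z -> Y)
    (Hphi : over_map f g phi) :
  sheaf_morph (Gamma_mor Hphi).
Proof. intros u v p a; apply Gamma_ext; reflexivity. Qed.

Lemma Gamma_mor_order (X Y Z : frame) (f : X -> Y) (g : X -> Z)
    (ordf : X -> (Y -> X) -> (Y -> X) -> Prop) (ordg : X -> (Z -> X) -> (Z -> X) -> Prop)
    (phi : Z -> Y) (Hphi : over_map f g phi) :
  op_map f ordf ordg phi -> op_morph (Gamma_ord f ordf) (Gamma_ord g ordg) (Gamma_mor Hphi).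
Proof. intros Hop u a b H; apply Hop; auto; apply proj2_sig. Qed.

Section LambdaOrder.
Variables (X : frame) (F : presheaf X).
Hypothesis HF : is_sheaf F.

Lemma Lam_ord_psec (ord : forall u, F u -> F u -> Prop) u (a b : F u) :
  Lam_ord ord u (psec (existT (fun w => F w) u a)) (psec (existT (fun w => F w) u b)) <-> ord u a b.
Proof.
split.
- intros [a' [b' [E1 [E2 H]]]].
  apply (psec_inj HF) in E1; apply (psec_inj HF) in E2; subst; exact H.
- intro H; exists a, b; auto.
Qed.

Lemma kappa_order (ord : forall u, F u -> F u -> Prop) u (a b : F u) :
  ord u a b <-> Gamma_ord (Lam_proj F) (Lam_ord ord) u (kappa F u a) (kappa F u b).
Proof. symmetry; apply Lam_ord_psec. Qed.

Lemma kappa_sheaf_morph : sheaf_morph (kappa F).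
Proof. intros u v p a; apply Gamma_ext; intro y; simpl; rewrite <- (psec_restr p); reflexivity. Qed.

Lemma kappa_bijective u : bijective (kappa F u).
Proof.
split.
- intros a b E; apply (psec_inj HF); exact (f_equal (@proj1_sig _ _) E).
- intros [sg Hsg]; destruct (section_is_psec HF Hsg) as [a ->].
  exists a; apply sig_eq; reflexivity.
Qed.

Lemma Lam_POLH (ord : forall u, F u -> F u -> Prop) :
  is_posheaf F ord -> is_POLH (Lam_proj F) (Lam_ord ord).
Proof.
intros [_ [O1 [O2 O3]]].
split; [apply (Lam_local_homeo HF)|split; [|split]].
- intro u; destruct (O1 u) as [R [A T]]; split; [|split].
  + intros s Hs; destruct (section_is_psec HF Hs) as [a ->]; apply Lam_ord_psec, R.
  + intros s t Hs Ht; destruct (section_is_psec HF Hs) as [a ->];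
      destruct (section_is_psec HF Ht) as [b ->].
    rewrite !Lam_ord_psec; intros H1 H2; rewrite (A a b H1 H2); reflexivity.
  + intros s t r Hs Ht Hr; destruct (section_is_psec HF Hs) as [a ->];
      destruct (section_is_psec HF Ht) as [b ->]; destruct (section_is_psec HF Hr) as [c ->].
    rewrite !Lam_ord_psec; apply T.
- intros u v s t Hvu Hs Ht; destruct (section_is_psec HF Hs) as [a ->];
    destruct (section_is_psec HF Ht) as [b ->].
  rewrite (psec_restr Hvu a), (psec_restr Hvu b), !Lam_ord_psec; apply O2.
- intros I c u s t Hu Hs Ht H; destruct (section_is_psec HF Hs) as [a ->];
    destruct (section_is_psec HF Ht) as [b ->].
  apply Lam_ord_psec, (O3 I c u Hu); intro i.
  apply Lam_ord_psec; rewrite <- !psec_restr; apply H.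
Qed.

End LambdaOrder.

Lemma Lam_mor_order (X : frame) (F G : presheaf X) (ordF : forall u, F u -> F u -> Prop)
    (ordG : forall u, G u -> G u -> Prop) (al : forall u, F u -> G u) (Hal : sheaf_morph al) :
  op_morph ordF ordG al -> op_map (Lam_proj F) (Lam_ord ordF) (Lam_ord ordG) (Lam_mor Hal).
Proof.
intros Hop u s t _ _ [a [b [-> [-> H]]]].
exists (al u a), (al u b); split; [reflexivity|split; [reflexivity|]]; apply Hop, H.
Qed.

Lemma theta_order (X Y : frame) (f : X -> Y) (ord : X -> (Y -> X) -> (Y -> X) -> Prop) :
  op_map (Lam_proj (Gamma f)) (Lam_ord (Gamma_ord f ord)) ord (theta f).
Proof. intros u s t _ _ [a [b [-> [-> H]]]]; exact H. Qed.

Lemma psi_order (X Y : frame) (f : X -> Y) (ord : X -> (Y -> X) -> (Y -> X) -> Prop) :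
  local_homeo f -> op_map f ord (Lam_ord (Gamma_ord f ord)) (psi (f := f)).
Proof.
intros Hloc u s t Hs Ht H; exists (exist _ s Hs), (exist _ t Ht).
split; [|split; [|exact H]]; apply functional_extensionality; intro x; unfold psec.
- exact (f_equal (fun z => proj1_sig z (existT _ u (exist _ s Hs))) (theta_psi Hloc x)).
- exact (f_equal (fun z => proj1_sig z (existT _ u (exist _ t Ht))) (theta_psi Hloc x)).
Qed.

Theorem corollary4p3 (X : frame) :
  (forall (Y : frame) (f : X -> Y) (ord : X -> (Y -> X) -> (Y -> X) -> Prop),
     is_POLH f ord -> is_posheaf (Gamma f) (Gamma_ord f ord)) /\
  (forall (F : presheaf X) (ord : forall u, F u -> F u -> Prop),
     is_posheaf F ord -> is_POLH (Lam_proj F) (Lam_ord ord)) /\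
  (forall (Y Z : frame) (f : X -> Y) (g : X -> Z)
     (ordf : X -> (Y -> X) -> (Y -> X) -> Prop) (ordg : X -> (Z -> X) -> (Z -> X) -> Prop)
     (phi : Z -> Y) (Hphi : over_map f g phi),
     is_POLH f ordf -> is_POLH g ordg -> op_map f ordf ordg phi ->
     sheaf_morph (Gamma_mor Hphi) /\
     op_morph (Gamma_ord f ordf) (Gamma_ord g ordg) (Gamma_mor Hphi)) /\
  (forall (F G : presheaf X) (ordF : forall u, F u -> F u -> Prop)
     (ordG : forall u, G u -> G u -> Prop)
     (al : forall u, F u -> G u) (Hal : sheaf_morph al),
     is_posheaf F ordF -> is_posheaf G ordG -> op_morph ordF ordG al ->
     over_map (Lam_proj F) (Lam_proj G) (Lam_mor Hal) /\
     op_map (Lam_proj F) (Lam_ord ordF) (Lam_ord ordG) (Lam_mor Hal)) /\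
  (forall (Y : frame) (f : X -> Y) (ord : X -> (Y -> X) -> (Y -> X) -> Prop),
     is_POLH f ord ->
     over_map (Lam_proj (Gamma f)) f (theta f) /\
     op_map (Lam_proj (Gamma f)) (Lam_ord (Gamma_ord f ord)) ord (theta f) /\
     exists psi : Lam (Gamma f) -> Y,
       over_map f (Lam_proj (Gamma f)) psi /\
       (forall y, psi (theta f y) = y) /\ (forall z, theta f (psi z) = z) /\
       op_map f ord (Lam_ord (Gamma_ord f ord)) psi) /\
  (forall (Y Z : frame) (f : X -> Y) (g : X -> Z)
     (ordf : X -> (Y -> X) -> (Y -> X) -> Prop) (ordg : X -> (Z -> X) -> (Z -> X) -> Prop)
     (phi : Z -> Y) (Hphi : over_map f g phi) (Hn : sheaf_morph (Gamma_mor Hphi)),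
     is_POLH f ordf -> is_POLH g ordg -> op_map f ordf ordg phi ->
     forall z, Lam_mor Hn (theta g z) = theta f (phi z)) /\
  (forall (F : presheaf X) (ord : forall u, F u -> F u -> Prop),
     is_posheaf F ord ->
     sheaf_morph (kappa F) /\ (forall u, bijective (kappa F u)) /\
     (forall u a b, ord u a b <-> Gamma_ord (Lam_proj F) (Lam_ord ord) u (kappa F u a) (kappa F u b))) /\
  (forall (F G : presheaf X) (ordF : forall u, F u -> F u -> Prop)
     (ordG : forall u, G u -> G u -> Prop)
     (al : forall u, F u -> G u) (Hal : sheaf_morph al)
     (Hov : over_map (Lam_proj F) (Lam_proj G) (Lam_mor Hal)),
     is_posheaf F ordF -> is_posheaf G ordG -> op_morph ordF ordG al ->
     forall u (a : F u), Gamma_mor Hov u (kappa F u a) = kappa G u (al u a)).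
Proof.
split; [|split; [|split; [|split; [|split; [|split; [|split]]]]]].
- intros Y f ord; apply Gamma_posheaf.
- intros F ord HF; apply (Lam_POLH (proj1 HF) HF).
- intros Y Z f g ordf ordg phi Hphi _ _ Hop.
  split; [apply Gamma_mor_sheaf_morph|apply Gamma_mor_order, Hop].
- intros F G ordF ordG al Hal _ _ Hop; split; [apply Lam_mor_over|apply Lam_mor_order, Hop].
- intros Y f ord [Hloc _]; split; [apply theta_over|split; [apply theta_order|]].
  exists (psi (f := f)); split; [apply (psi_over Hloc)|].
  split; [apply (psi_theta Hloc)|split; [apply (theta_psi Hloc)|apply (psi_order Hloc)]].
- intros Y Z f g ordf ordg phi Hphi Hn _ _ _ z; apply Lam_ext; reflexivity.
- intros F ord [HF _]; split; [apply kappa_sheaf_morph|split].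
  + apply (kappa_bijective HF).
  + apply (kappa_order HF).
- intros F G ordF ordG al Hal Hov _ _ _ u a; apply Gamma_ext; reflexivity.
Qed.
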